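(* Let $M_{3/4}$ be the additive submonoid of $\mathbb{Q}$ generated by $\{(3/4)^n : n \in \mathbb{N}_0\}$. Let $f$ be a nonzero element of $\mathbb{Q}[M_{3/4}]$ such that some exponent $s$ in the support of $f$ satisfies the ACCP in $M_{3/4}$ (every ascending chain of principal ideals of $M_{3/4}$ starting at $s + M_{3/4}$ stabilizes). Then $f$ satisfies the ACCP in $\mathbb{Q}[M_{3/4}]$, i.e., every ascending chain of principal ideals of $\mathbb{Q}[M_{3/4}]$ starting at $f\,\mathbb{Q}[M_{3/4}]$ stabilizes.
   Context: $\mathbb{Q}[M_{3/4}]$ is the integral domain of polynomial expressions $\sum_{i} c_i x^{m_i}$ with nonzero $c_i \in \mathbb{Q}$ and distinct $m_i \in M_{3/4}$; the support of such an expression is the set of the $m_i$. *)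

From HB Require Import structures.
From mathcomp Require Import all_boot all_order all_algebra.
From mathcomp Require Import finmap.
Set Implicit Arguments. Unset Strict Implicit. Unset Printing Implicit Defensive.
Import Order.TTheory GRing.Theory Num.Theory.
Local Open Scope ring_scope.

Definition inM34 (q : rat) : Prop :=
  exists s : seq nat, q = \sum_(n <- s) (3%:R / 4%:R : rat) ^+ n.

Definition mdvd (t s : rat) : Prop := exists u, inM34 u /\ s = t + u.

Definition ACCP_M34 (s : rat) : Prop :=
  forall a : nat -> rat,
    (forall n, inM34 (a n)) -> a 0%N = s ->
    (forall n, mdvd (a n.+1) (a n)) ->
    exists N, forall n, (N <= n)%N -> mdvd (a n) (a n.+1).

Record QM34 := MkQM34 {
  coef : {fsfun rat -> rat with 0};
  coef_supp : forall m, m \in finsupp coef -> inM34 m }.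

Definition mulc (f g : QM34) (m : rat) : rat :=
  \sum_(a <- finsupp (coef f)) \sum_(b <- finsupp (coef g) | a + b == m)
     coef f a * coef g b.

Definition rdvd (g f : QM34) : Prop :=
  exists h : QM34, forall m, coef f m = mulc g h m.

Definition ACCP_QM34 (f : QM34) : Prop :=
  forall g : nat -> QM34, g 0%N = f ->
    (forall n, rdvd (g n.+1) (g n)) ->
    exists N, forall n, (N <= n)%N -> rdvd (g n) (g n.+1).

From mathcomp Require Import all_boot all_order all_algebra all_field.
From mathcomp Require Import finmap.
From mathcomp Require Import ring.
From Stdlib Require Import Classical IndefiniteDescription.
Import Order.TTheory GRing.Theory Num.Theory.
Set Implicit Arguments.
Unset Strict Implicit.
Unset Printing Implicit Defensive.
Local Open Scope ring_scope.

(* Write the chain as g_n = g_(n+1) h_n. Following an exponent from s down through these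
   factorizations gives a divisor chain in M_{3/4}, which stabilizes by the ACCP at s, so
   eventually 0 is in the support of h_n. The largest exponent is additive, so those of the
   h_n have bounded partial sums and eventually drop below (3/4)^m for any fixed m. Below
   (3/4)^m an element of M_{3/4} lies in (3/4)^(m+1) M_{3/4}; hence after the substitution
   x = y^(4^J) clearing all denominators, h_n is a polynomial in y^(3^(m+1)) with nonzero
   constant term. A nonzero root b of it yields the 3^(m+1) roots b z, z^(3^(m+1)) = 1, which
   are roots of g_0 as well and stay distinct when the substitution is undone (4 and 3 are
   coprime). Taking 3^(m+1) beyond the degree of g_0, h_n is eventually a nonzero constant. *)

Lemma eventually_all (I : eqType) (s : seq I) (P : I -> nat -> Prop) :
  (forall i, i \in s -> exists L, forall J, (L <= J)%N -> P i J) ->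
  exists L, forall J, (L <= J)%N -> forall i, i \in s -> P i J.
Proof.
elim: s => [|i s IHs] Ps; first by exists 0%N.
have [Li HLi] := Ps i (mem_head i s).
have [Ls HLs] := IHs (fun j js => Ps j (mem_behead (s := i :: s) js)).
exists (maxn Li Ls) => J; rewrite geq_max => /andP[LiJ LsJ] j.
by rewrite in_cons => /predU1P[->|js]; [exact: HLi | exact: HLs].
Qed.

Lemma eventually_lt_of_bounded_sums (R : archiRealFieldType) (u : nat -> R) (d D : R) :
  0 < d -> (forall n, 0 <= u n) -> (forall n, \sum_(k < n) u k <= D) ->
  exists N, forall n, (N <= n)%N -> u n < d.
Proof.
move=> d_gt0 u_ge0 sum_leD; apply: NNPP => no_N.
have often n0 : exists2 n, (n0 <= n)%N & d <= u n.
  apply: NNPP => no_n; apply: no_N; exists n0 => n n0n.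
  by rewrite ltNge; apply/negP => dun; apply: no_n; exists n.
have sum_mono n1 n2 : (n1 <= n2)%N -> \sum_(k < n1) u k <= \sum_(k < n2) u k.
  move=> n12; rewrite (big_ord_widen n2 u n12) big_mkcond /=.
  by apply: ler_sum => k _; case: ifP.
have large c : exists n, c%:R * d <= \sum_(k < n) u k.
  elim: c => [|c [n cdS]]; first by exists 0%N; rewrite mul0r big_ord0.
  have [n' nn' dun'] := often n; exists n'.+1.
  rewrite big_ord_recr /= -natr1 mulrDl mul1r lerD //.
  exact: le_trans cdS (sum_mono _ _ nn').
have D_ge0 : 0 <= D by apply: le_trans (sum_leD 0%N); rewrite big_ord0.
have [n] := large (Num.Def.archi_bound (D / d)).
apply/negP; rewrite -ltNge; apply: le_lt_trans (sum_leD n) _.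
by rewrite -ltr_pdivrMr // archi_boundP // divr_ge0 // ltW.
Qed.

Notation q34 := (3%:R / 4%:R : rat).

Lemma inM34_ge0 a : inM34 a -> 0 <= a.
Proof. by case=> s ->; apply: sumr_ge0 => n _; apply: exprn_ge0. Qed.

Lemma q34X_scale n J : (n <= J)%N ->
  q34 ^+ n * 4%:R ^+ J = (3 ^ n * 4 ^ (J - n))%N%:R.
Proof.
move=> nJ; rewrite -(subnKC nJ) addKn exprD expr_div_n natrM !natrX.
by field; rewrite expf_neq0 // pnatr_eq0.
Qed.

Lemma inM34_eventually_nat a : inM34 a ->
  exists L, forall J, (L <= J)%N -> a * 4%:R ^+ J \is a Num.nat.
Proof.
case=> s ->; exists (\max_(n <- s) n) => J maxJ.
rewrite mulr_suml big_seq rpred_sum // => n ns.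
by rewrite q34X_scale ?natr_nat // (leq_trans _ maxJ) // leq_bigmax_seq.
Qed.

Lemma inM34_lt_q34X a m : inM34 a -> a < q34 ^+ m ->
  exists2 b, inM34 b & a = q34 ^+ m.+1 * b.
Proof.
case=> s -> lt_m.
have gt_m n : n \in s -> (m < n)%N.
  move=> ns; rewrite ltnNge; apply: contraTN lt_m => nm; rewrite -leNgt.
  rewrite (le_trans (ler_wiXn2l _ _ nm)) //.
  rewrite (perm_big _ (perm_to_rem ns)) big_cons lerDl.
  by rewrite sumr_ge0 // => k _; apply: exprn_ge0.
exists (\sum_(n <- s) q34 ^+ (n - m.+1)%N).
  by exists [seq (n - m.+1)%N | n <- s]; rewrite big_map.
by rewrite mulr_sumr; apply: eq_big_seq => n /gt_m mn; rewrite -exprD subnKC.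
Qed.

Lemma inM34_lt_q34X_dvdn a m J k : inM34 a -> a < q34 ^+ m ->
  a * 4%:R ^+ J = k%:R -> (3 ^ m.+1 %| k)%N.
Proof.
move=> Ma /(inM34_lt_q34X Ma)[b Mb ->] bk.
have [L /(_ L (leqnn L))/natrP[l bl]] := inM34_eventually_nat Mb.
have kl : (k * 4 ^ (L + m.+1) = 3 ^ m.+1 * (l * 4 ^ J))%N.
  apply/eqP; rewrite -(eqr_nat rat) !natrM !natrX -bk -bl exprD expr_div_n.
  by apply/eqP; field; rewrite expf_neq0 // pnatr_eq0.
have : (3 ^ m.+1 %| k * 4 ^ (L + m.+1))%N by rewrite kl dvdn_mulr.
by rewrite Gauss_dvdl // coprimeXl // coprimeXr.
Qed.

Lemma sum_finsupp_pred1 (R : nmodType) (f : {fsfun rat -> rat with 0}) (P : pred rat)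
    (x : rat) (F : rat -> R) :
  {in finsupp f, P =1 pred1 x} -> (f x = 0 -> F x = 0) ->
  \sum_(a <- finsupp f | P a) F a = F x.
Proof.
move=> Px; rewrite -big_filter (eq_in_filter Px).
case: (finsuppP f x) => [xf /(_ erefl) Fx | xf _].
  rewrite big_filter big1_seq ?Fx // => a /andP[/eqP -> ax].
  by rewrite ax in xf.
by rewrite filter_pred1_uniq ?fset_uniq // big_seq1.
Qed.

Lemma mulcE g h m :
  mulc g h m = \sum_(a <- finsupp (coef g)) coef g a * coef h (m - a).
Proof.
apply: eq_big_seq => a _; apply: sum_finsupp_pred1 => [b _ | ->]; last by rewrite mulr0.
by rewrite /= [RHS]eq_sym subr_eq eq_sym addrC.
Qed.

Lemma mulc_neq0 g h m : mulc g h m != 0 ->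
  exists b c, [/\ b \in finsupp (coef g), c \in finsupp (coef h) & b + c = m].
Proof.
move=> mulc_nz; apply: NNPP => no_bc; move: mulc_nz.
rewrite /mulc big1_seq ?eqxx // => b /andP[_ gb].
rewrite big1_seq // => c /andP[/eqP bcm hc].
by case: no_bc; exists b, c.
Qed.

Lemma mulc_supp0 g h m : (forall e, e \in finsupp (coef h) -> e = 0) ->
  mulc g h m = coef g m * coef h 0.
Proof.
move=> h_supp; rewrite mulcE.
rewrite (eq_bigr (fun a => if a == m then coef g a * coef h 0 else 0)) => [|a _].
  by rewrite -big_mkcond (sum_finsupp_pred1 (x := m)) // => ->; rewrite mul0r.
case: eqVneq => [->|am]; first by rewrite subrr.
case: (finsuppP (coef h) (m - a)) => [_|/h_supp/eqP]; first by rewrite mulr0.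
by rewrite subr_eq0 eq_sym (negPf am).
Qed.

Definition const_fsfun (c : rat) : {fsfun rat -> rat with 0} :=
  [fsfun x in [fset 0]%fset => c].

Lemma const_fsfunE c x : const_fsfun c x = if x == 0 then c else 0.
Proof. by rewrite /const_fsfun fsfun_fun inE. Qed.

Lemma finsupp_const_fsfun c x : x \in finsupp (const_fsfun c) -> x = 0.
Proof. by rewrite mem_finsupp const_fsfunE; case: ifP => [/eqP-> | _]; rewrite ?eqxx. Qed.

Lemma inM34_finsupp_const c x : x \in finsupp (const_fsfun c) -> inM34 x.
Proof. by move/finsupp_const_fsfun->; exists [::]; rewrite big_nil. Qed.

Definition QM34_const (c : rat) : QM34 := MkQM34 (@inM34_finsupp_const c).

Lemma rdvd_supp0_factor f g h : (forall m, coef f m = mulc g h m) ->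
  0 \in finsupp (coef h) -> (forall e, e \in finsupp (coef h) -> e = 0) -> rdvd f g.
Proof.
move=> fE h0 h_supp; exists (QM34_const (coef h 0)^-1) => m.
rewrite mulc_supp0 => [|e]; last exact: finsupp_const_fsfun.
by rewrite fE mulc_supp0 //= const_fsfunE eqxx mulfK // -mem_finsupp.
Qed.

Lemma expr4_neq0 J : (4%:R ^+ J : rat) != 0.
Proof. by rewrite expf_neq0 // pnatr_eq0. Qed.

(* [poly_at J g] is g with x := y^(4^J); [scaled] truncates exponents that [cleared J g]
   does not make integral. *)
Definition scaled (J : nat) (a : rat) : nat := Num.trunc (a * 4%:R ^+ J).

Definition cleared (J : nat) (g : QM34) : Prop :=
  forall a, a \in finsupp (coef g) -> a * 4%:R ^+ J \is a Num.nat.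

Definition poly_at (J : nat) (g : QM34) : {poly algC} :=
  \sum_(a <- finsupp (coef g)) ratr (coef g a) *: 'X^(scaled J a).

Definition mdeg (g : QM34) : rat := \big[Num.max/0]_(a <- finsupp (coef g)) a.

Lemma mdeg_ge0 g : 0 <= mdeg g.
Proof. exact: bigmax_ge_id. Qed.

Lemma le_mdeg g a : a \in finsupp (coef g) -> a <= mdeg g.
Proof. by move=> ga; apply: le_bigmax_seq. Qed.

Lemma mdeg_le g x : 0 <= x -> (forall a, a \in finsupp (coef g) -> a <= x) ->
  mdeg g <= x.
Proof. by move=> x_ge0 gx; rewrite /mdeg big_seq; apply: bigmax_le. Qed.

Lemma cleared_eventually g : exists L, forall J, (L <= J)%N -> cleared J g.
Proof.
have [L HL] := eventually_all (s := finsupp (coef g))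
  (P := fun a J => a * 4%:R ^+ J \is a Num.nat) (fun a ga => inM34_eventually_nat (coef_supp ga)).
by exists L => J /HL.
Qed.

Lemma cleared_family (F : nat -> QM34) n :
  exists L, forall J, (L <= J)%N -> forall k, (k < n)%N -> cleared J (F k).
Proof.
have [L HL] := eventually_all (s := iota 0 n) (P := fun k J => cleared J (F k))
  (fun k _ => cleared_eventually (F k)).
by exists L => J /HL FJ k kn; apply: FJ; rewrite mem_iota.
Qed.

Section Cleared.
Variables (J : nat) (g : QM34).
Hypothesis gJ : cleared J g.

Lemma scaledK a : a \in finsupp (coef g) -> (scaled J a)%:R = a * 4%:R ^+ J.
Proof. by move=> ga; rewrite truncnK ?gJ. Qed.

Lemma scaled_eq a i : a \in finsupp (coef g) ->
  (scaled J a == i) = (a == i%:R / 4%:R ^+ J).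
Proof.
move=> ga; rewrite -(eqr_nat rat) scaledK //.
by rewrite -[RHS](inj_eq (mulIf (expr4_neq0 J))) divfK ?expr4_neq0.
Qed.

Lemma coef_poly_at i : (poly_at J g)`_i = ratr (coef g (i%:R / 4%:R ^+ J)).
Proof.
rewrite coef_sumMXn (sum_finsupp_pred1 (x := i%:R / 4%:R ^+ J)) => [//|a ga|->].
- by rewrite /= scaled_eq.
- by rewrite rmorph0.
Qed.

Lemma coef_poly_at_scaled a : a \in finsupp (coef g) ->
  (poly_at J g)`_(scaled J a) = ratr (coef g a).
Proof. by move=> ga; rewrite coef_poly_at scaledK // mulfK ?expr4_neq0. Qed.

Lemma scaled_lt_size a : a \in finsupp (coef g) -> (scaled J a < size (poly_at J g))%N.
Proof.
move=> ga; rewrite ltnNge; apply/negP => /(nth_default 0).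
rewrite coef_poly_at_scaled // => /eqP; rewrite fmorph_eq0; apply/negP.
by rewrite -mem_finsupp.
Qed.

Lemma poly_at_neq0 a : a \in finsupp (coef g) -> poly_at J g != 0.
Proof. by move/scaled_lt_size/gt_size_poly_neq0. Qed.

Lemma size_poly_at : ((size (poly_at J g)).-1)%:R = mdeg g * 4%:R ^+ J.
Proof.
have pow4J_gt0 : (0 : rat) < 4%:R ^+ J by rewrite exprn_gt0.
apply/eqP; rewrite eq_le; apply/andP; split.
  have [->|p_neq0] := eqVneq (poly_at J g) 0.
    by rewrite size_poly0 mulr_ge0 ?mdeg_ge0 ?ltW.
  rewrite -ler_pdivrMr //; apply: le_mdeg.
  by move: p_neq0; rewrite -lead_coef_eq0 /lead_coef coef_poly_at fmorph_eq0 -mem_finsupp.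
rewrite -ler_pdivlMr //; apply: mdeg_le => [|a ga].
  exact: divr_ge0 (ler0n _ _) (ltW pow4J_gt0).
rewrite ler_pdivlMr // -scaledK // ler_nat -ltnS (ltn_predK (scaled_lt_size ga)).
exact: scaled_lt_size.
Qed.

End Cleared.

Lemma poly_at_mul J f g h : cleared J f -> cleared J g -> cleared J h ->
  (forall m, coef f m = mulc g h m) -> poly_at J f = poly_at J g * poly_at J h.
Proof.
move=> fJ gJ hJ fE; apply/polyP => i.
rewrite coef_poly_at // fE /mulc rmorph_sum /poly_at mulr_suml coef_sum.
set x := i%:R / 4%:R ^+ J.
apply: eq_big_seq => a ga; rewrite mulr_sumr coef_sum rmorph_sum big_mkcond /=.
apply: eq_big_seq => b hb; rewrite -scalerAl -scalerAr scalerA -exprD coefZ coefXn.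
have -> : (i == (scaled J a + scaled J b)%N) = (a + b == x).
  rewrite -(eqr_nat rat) natrD (scaledK gJ) // (scaledK hJ) // -mulrDl eq_sym.
  by rewrite -[RHS](inj_eq (mulIf (expr4_neq0 J))) divfK ?expr4_neq0.
by case: eqP; rewrite ?rmorphM ?mulr1 ?mulr0 ?rmorph0.
Qed.

Lemma horner_poly_at_rescale K J g u : cleared K g -> (K <= J)%N ->
  (poly_at J g).[u] = (poly_at K g).[u ^+ (4 ^ (J - K))].
Proof.
move=> gK KJ; rewrite !horner_sum; apply: eq_big_seq => a ga.
rewrite !hornerZ !hornerXn -exprM mulnC.
have aJ : a * 4%:R ^+ J = (scaled K a * 4 ^ (J - K))%:R.
  by rewrite natrM natrX (scaledK gK) // -mulrA -exprD subnKC.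
by rewrite /scaled aJ natrK.
Qed.

Lemma mdeg_mul f g h b c : b \in finsupp (coef g) -> c \in finsupp (coef h) ->
  (forall m, coef f m = mulc g h m) -> mdeg f = mdeg g + mdeg h.
Proof.
move=> gb hc fE.
have [[Lf Hf] [Lg Hg] [Lh Hh]] :=
  And3 (cleared_eventually f) (cleared_eventually g) (cleared_eventually h).
pose J := (Lf + Lg + Lh)%N.
have fJ : cleared J f by apply: Hf; rewrite /J -addnA leq_addr.
have gJ : cleared J g by apply: Hg; rewrite /J addnAC leq_addl.
have hJ : cleared J h by apply: Hh; rewrite /J leq_addl.
have deg_mul : ((size (poly_at J f)).-1 = (size (poly_at J g)).-1 + (size (poly_at J h)).-1)%N.
  rewrite (poly_at_mul fJ gJ hJ fE) size_mul ?(poly_at_neq0 gJ gb) ?(poly_at_neq0 hJ hc) //.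
  by rewrite (polySpred (poly_at_neq0 gJ gb)) (polySpred (poly_at_neq0 hJ hc)) addSn addnS.
apply: (mulIf (expr4_neq0 J)).
by rewrite mulrDl -!size_poly_at // deg_mul natrD.
Qed.

Lemma horner_mul_unity_root (R : comNzRingType) (p : {poly R}) (Q : nat) (b z : R) :
  (forall i, p`_i != 0 -> (Q %| i)%N) -> z ^+ Q = 1 -> p.[b * z] = p.[b].
Proof.
move=> p_dvd zQ; rewrite !horner_coef; apply: eq_bigr => i _.
have [->|/p_dvd/dvdnP[k ->]] := eqVneq p`_i 0; first by rewrite !mul0r.
by rewrite exprMn [z ^+ _]exprM exprAC zQ expr1n mulr1.
Qed.

Lemma unity_root_orbit_size (r : {poly algC}) (b : algC) (Q E : nat) :
  r != 0 -> b != 0 -> (0 < Q)%N -> coprime E Q ->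
  (forall z, z ^+ Q = 1 -> root r ((b * z) ^+ E)) -> (Q < size r)%N.
Proof.
move=> r_neq0 b_neq0 Q_gt0 coEQ r_roots.
have [w w_prim] := C_prim_root_exists Q_gt0.
have wE_prim : Q.-primitive_root (w ^+ E) by rewrite prim_root_exp_coprime.
pose rs := [seq (b * w ^+ i) ^+ E | i <- iota 0 Q].
have := max_poly_roots r_neq0 (rs := rs); rewrite size_map size_iota; apply.
  apply/allP => _ /mapP[i _ ->]; apply: r_roots.
  by rewrite exprAC (prim_expr_order w_prim) expr1n.
rewrite map_inj_in_uniq ?iota_uniq // => i j; rewrite !mem_iota /= !add0n => iQ jQ.
rewrite !exprMn => /(mulfI (expf_neq0 E b_neq0)); rewrite -!exprM !(mulnC _ E) !exprM.
by move/eqP; rewrite (eq_prim_root_expr wE_prim) !modn_small // => /eqP.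
Qed.

Section FactorChain.
Variables (g h : nat -> QM34).
Hypothesis g_factor : forall n m, coef (g n) m = mulc (g n.+1) (h n) m.
Variable s : rat.
Hypothesis s_supp : s \in finsupp (coef (g 0)).
Hypothesis s_accp : ACCP_M34 s.

Definition supp_pred n (a : rat) : rat :=
  head 0 [seq b <- finsupp (coef (g n.+1)) | a - b \in finsupp (coef (h n))].

Fixpoint supp_chain n : rat :=
  if n is n'.+1 then supp_pred n' (supp_chain n') else s.

Lemma supp_pred_spec n a : a \in finsupp (coef (g n)) ->
  supp_pred n a \in finsupp (coef (g n.+1)) /\
  a - supp_pred n a \in finsupp (coef (h n)).
Proof.
rewrite mem_finsupp g_factor => /mulc_neq0[b [c [gb hc bc]]].
rewrite /supp_pred; set l := [seq _ <- _ | _].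
have bl : b \in l by rewrite mem_filter gb -bc addrAC subrr add0r hc.
have : head 0 l \in l by case: l bl => [|x l'] //= _; rewrite mem_head.
by rewrite mem_filter => /andP[].
Qed.

Lemma supp_chain_spec n : supp_chain n \in finsupp (coef (g n)) /\
  supp_chain n - supp_chain n.+1 \in finsupp (coef (h n)).
Proof.
suff gn : supp_chain n \in finsupp (coef (g n)) by split => //; apply: (supp_pred_spec gn).2.
by elim: n => [|n IHn] //=; apply: (supp_pred_spec IHn).1.
Qed.

Lemma finsupp_h0_eventually : exists N, forall n, (N <= n)%N -> 0 \in finsupp (coef (h n)).
Proof.
have chain_dvd n : mdvd (supp_chain n.+1) (supp_chain n).
  exists (supp_chain n - supp_chain n.+1); split; last by rewrite addrC subrK.
  exact: coef_supp (supp_chain_spec n).2.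
have [N HN] := s_accp (fun n => coef_supp (supp_chain_spec n).1) erefl chain_dvd.
exists N => n /HN[u [Mu chain_u]]; have := (supp_chain_spec n).2.
suff -> : supp_chain n - supp_chain n.+1 = 0 by [].
apply/eqP; rewrite eq_le (inM34_ge0 (coef_supp (supp_chain_spec n).2)) andbT.
by rewrite chain_u opprD addrA subrr sub0r oppr_le0 inM34_ge0.
Qed.

Lemma mdeg_telescope n : mdeg (g 0) = mdeg (g n) + \sum_(k < n) mdeg (h k).
Proof.
elim: n => [|n IHn]; first by rewrite big_ord0 addr0.
rewrite IHn big_ord_recr /= addrA -[mdeg (g n.+1) + _ + _]addrAC.
by rewrite -(mdeg_mul (supp_chain_spec n.+1).1 (supp_chain_spec n).2 (g_factor n)).
Qed.

Lemma sum_mdeg_h_le n : \sum_(k < n) mdeg (h k) <= mdeg (g 0).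
Proof. by rewrite (mdeg_telescope n) lerDr mdeg_ge0. Qed.

Lemma poly_at_h_dvd n J :
  (forall k, (k < n.+2)%N -> cleared J (g k)) ->
  (forall k, (k < n.+1)%N -> cleared J (h k)) ->
  poly_at J (h n) %| poly_at J (g 0).
Proof.
move=> gJ hJ.
have g_step k : (k <= n)%N -> poly_at J (g k) = poly_at J (g k.+1) * poly_at J (h k).
  by move=> kn; apply: poly_at_mul; [apply: gJ; rewrite ltnW | apply: gJ | apply: hJ |].
suff dvd_g k : (k <= n)%N -> poly_at J (h n) %| poly_at J (g (n - k)).
  by rewrite -(subnn n) dvd_g.
elim: k => [_|k IHk kn]; first by rewrite subn0 g_step // dvdp_mulIr.
by rewrite g_step ?leq_subr // subnSK // dvdp_mulr // IHk // ltnW.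
Qed.

Lemma finsupp_h_eq0 n K m :
  cleared K (g 0) -> (size (poly_at K (g 0)) <= 3 ^ m.+1)%N ->
  0 \in finsupp (coef (h n)) -> mdeg (h n) < q34 ^+ m ->
  forall e, e \in finsupp (coef (h n)) -> e = 0.
Proof.
move=> g0K size_g0 h0 h_small e he; apply/eqP/negPn/negP => e_neq0.
have [Lg HLg] := cleared_family g n.+2; have [Lh HLh] := cleared_family h n.+1.
pose J := (K + Lg + Lh)%N.
have gJ : forall k, (k < n.+2)%N -> cleared J (g k).
  by apply: HLg; rewrite /J addnAC leq_addl.
have hJ : forall k, (k < n.+1)%N -> cleared J (h k).
  by apply: HLh; rewrite /J leq_addl.
have hnJ := hJ n (ltnSn n).
pose P := poly_at J (h n).
have P_dvdn i : P`_i != 0 -> (3 ^ m.+1 %| i)%N.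
  rewrite coef_poly_at // fmorph_eq0 -mem_finsupp => hi.
  apply: (inM34_lt_q34X_dvdn (J := J) (coef_supp hi)).
    exact: le_lt_trans (le_mdeg hi) h_small.
  by rewrite divfK ?expr4_neq0.
have [b /rootP Pb] : exists b, root P b.
  have e_scaled : (0 < scaled J e)%N.
    by rewrite lt0n -(eqr_nat rat) (scaledK hnJ) // mulf_eq0 negb_or e_neq0 expr4_neq0.
  by apply/closed_rootP; rewrite gtn_eqF // (leq_ltn_trans e_scaled (scaled_lt_size hnJ he)).
have b_neq0 : b != 0.
  apply: contra_eq_neq Pb => ->; rewrite horner_coef0 coef_poly_at // mul0r.
  by rewrite fmorph_eq0 -mem_finsupp h0.
have KJ : (K <= J)%N by rewrite /J -addnA leq_addr.
have g0_roots z : z ^+ (3 ^ m.+1)%N = 1 ->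
    root (poly_at K (g 0)) ((b * z) ^+ (4 ^ (J - K))%N).
  move=> zQ; apply/rootP; rewrite -horner_poly_at_rescale //.
  apply/rootP/(root_dvdp (poly_at_h_dvd gJ hJ))/rootP.
  by rewrite (horner_mul_unity_root b P_dvdn zQ).
have coprime_4_3 : coprime (4 ^ (J - K)) (3 ^ m.+1) by rewrite coprimeXl // coprimeXr.
have := unity_root_orbit_size (poly_at_neq0 g0K s_supp) b_neq0 (expn_gt0 3 m.+1)
  coprime_4_3 g0_roots.
by rewrite ltnNge size_g0.
Qed.

Lemma factor_chain_stabilizes : exists N, forall n, (N <= n)%N -> rdvd (g n) (g n.+1).
Proof.
have [N0 h0_supp] := finsupp_h0_eventually.
have [K /(_ K (leqnn K)) g0K] := cleared_eventually (g 0).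
pose m := size (poly_at K (g 0)).
have size_g0 : (m <= 3 ^ m.+1)%N by rewrite ltnW // ltnW // ltn_expl.
have q34X_gt0 : 0 < q34 ^+ m by rewrite exprn_gt0.
have [N1 h_small] := eventually_lt_of_bounded_sums q34X_gt0 (fun k => mdeg_ge0 (h k))
  sum_mdeg_h_le.
exists (maxn N0 N1) => n; rewrite geq_max => /andP[N0n N1n].
apply: rdvd_supp0_factor (g_factor n) (h0_supp n N0n) _.
exact: finsupp_h_eq0 g0K size_g0 (h0_supp n N0n) (h_small n N1n).
Qed.

End FactorChain.

Theorem proposition4p8 (f : QM34) :
  coef f != [fsfun] ->
  (exists s : rat, s \in finsupp (coef f) /\ ACCP_M34 s) ->
  ACCP_QM34 f.
Proof.
(* The first hypothesis is implied by the second. *)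
move=> _ [s [fs s_accp]] g g0 g_dvd.
pose h n := proj1_sig (constructive_indefinite_description _ (g_dvd n)).
have g_factor n m : coef (g n) m = mulc (g n.+1) (h n) m.
  exact: (proj2_sig (constructive_indefinite_description _ (g_dvd n))).
by apply: (factor_chain_stabilizes g_factor (s := s)) => //; rewrite g0.
Qed.
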